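(* The $\mathbb{Z}_2$-lattice $\mathbb{H}^3\perp\langle 1,-1\rangle$ primitively represents every $\mathbb{Z}_2$-lattice of rank $4$ that is not isometric to $\mathbb{A}\perp 2\mathbb{A}$.
   Context: A $\mathbb{Z}_2$-lattice is a finitely generated $\mathbb{Z}_2$-submodule of a quadratic space over $\mathbb{Q}_2$, assumed integral ($B(L,L)\subseteq\mathbb{Z}_2$) and nondegenerate. A representation is a $\mathbb{Z}_2$-linear map preserving $B$, primitive if its image is a direct summand. $\mathbb{H}$ has Gram matrix $\begin{pmatrix}0&1\\1&0\end{pmatrix}$, $\mathbb{H}^3=\mathbb{H}\perp\mathbb{H}\perp\mathbb{H}$, $\langle 1,-1\rangle$ has Gram matrix $\operatorname{diag}(1,-1)$, $\mathbb{A}$ has Gram matrix $\begin{pmatrix}2&1\\1&2\end{pmatrix}$, and $2\mathbb{A}$ has Gram matrix $\begin{pmatrix}4&2\\2&4\end{pmatrix}$. *)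

From HB Require Import structures.
From mathcomp Require Import all_boot all_order all_algebra.
Set Implicit Arguments. Unset Strict Implicit. Unset Printing Implicit Defensive.
Import Order.TTheory GRing.Theory Num.Theory.
Local Open Scope ring_scope.

(* The ring of 2-adic integers, characterised up to (unique) isomorphism:   *)
(* an integral domain R in which 2 is a nonzero non-unit, every nonzero      *)
(* element is 2^k * unit (so R is a DVR with uniformizer 2), the residue     *)
(* ring R/2R is {0,1} (= F_2), and R is 2-adically complete.                *)
(* Any such R is isomorphic to Z_2.                                          *)
Definition dvd2k (R : idomainType) (k : nat) (x : R) : Prop :=
  exists y : R, x = 2 ^+ k * y.

Definition is_Z2 (R : idomainType) : Prop :=
  [/\ (2 : R) != 0,
      (2 : R) \isn't a GRing.unit,
      forall x : R, x != 0 ->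
        exists (k : nat) (u : R), u \is a GRing.unit /\ x = 2 ^+ k * u,
      forall x : R, dvd2k 1 x \/ dvd2k 1 (x - 1)
    & forall a : nat -> R, (forall n, dvd2k n (a n.+1 - a n)) ->
        exists l : R, forall n, dvd2k n (l - a n)].

(* Lattices are given by Gram matrices in a Z_2-basis (column convention:  *)
(* B(v, w) = v^T G w).                                                      *)

(* A representation of the lattice with Gram G (rank n) by the lattice with *)
(* Gram M (rank m): a Z_2-linear map X : R^n -> R^m with X^T M X = G.       *)
(* It is primitive iff its image is a direct summand; since X is injective  *)
(* (G nondegenerate), this means X has a linear left inverse (retraction).  *)
Definition represents (R : idomainType) (m n : nat)
    (M : 'M[R]_m) (G : 'M[R]_n) : Prop :=
  exists X : 'M[R]_(m, n), X^T *m M *m X = G.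

Definition prim_represents (R : idomainType) (m n : nat)
    (M : 'M[R]_m) (G : 'M[R]_n) : Prop :=
  exists X : 'M[R]_(m, n),
    X^T *m M *m X = G /\ exists Y : 'M[R]_(n, m), Y *m X = 1%:M.

Definition isometric (R : idomainType) (n : nat) (G1 G2 : 'M[R]_n) : Prop :=
  exists U : 'M[R]_n, U \in unitmx /\ U^T *m G1 *m U = G2.

Definition mxHyp (R : idomainType) : 'M[R]_2 :=
  \matrix_(i, j) (if i == j then 0 else 1).
Definition mx1m1 (R : idomainType) : 'M[R]_2 :=
  \matrix_(i, j) (if i == j then (if i == 0 :> nat then 1 else -1) else 0).
Definition mxA (R : idomainType) : 'M[R]_2 :=
  \matrix_(i, j) (if i == j then 2 else 1).

Definition mxH3_1m1 (R : idomainType) : 'M[R]_8 :=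
  block_mx (mxHyp R) 0 0
    (block_mx (mxHyp R) 0 0 (block_mx (mxHyp R) 0 0 (mx1m1 R))).

Definition mxA_2A (R : idomainType) : 'M[R]_4 :=
  block_mx (mxA R) 0 0 (2 *: mxA R).

(* If some basis vector has odd norm, clearing the other diagonal entries lets the <1,-1>
   summand absorb it.  An even lattice embeds as soon as it has a basis whose first three
   norms are even and whose last vector has norm 4k and either pairs oddly with the third or
   has k even: the first three vectors go into the hyperbolic planes and the last one to
   (k + 1, k - 1) in <1,-1>.  Such a basis is found by parity cases: an odd inner product
   splits off a unimodular plane, which either contains a vector of norm divisible by 4 or
   is A; and a lattice 2L always has a primitive vector of norm divisible by 8, by a finite
   computation mod 4.  The only lattice escaping all cases is the orthogonal sum of A and 2A. *)

From HB Require Import structures.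
From mathcomp Require Import all_boot all_order all_algebra ring.
From Stdlib Require Import ClassicalEpsilon.
Import Order.TTheory GRing.Theory Num.Theory.
Set Implicit Arguments. Unset Strict Implicit. Unset Printing Implicit Defensive.
Local Open Scope ring_scope.

Section TwoAdicIntegers.
Variable R : idomainType.
Hypothesis HR : is_Z2 R.

Definition is_even (x : R) : Prop := exists y, x = 2 * y.
Definition is_odd (x : R) : Prop := exists y, x = 1 + 2 * y.

Lemma is_even_mul2 y : is_even (2 * y). Proof. by exists y. Qed.
Lemma is_odd_add_mul2 y : is_odd (1 + 2 * y). Proof. by exists y. Qed.
Lemma is_even2 : is_even 2. Proof. by exists 1; rewrite mulr1. Qed.

Lemma two_neq0 : (2 : R) != 0. Proof. by case: HR. Qed.
Lemma two_nonunit : (2 : R) \isn't a GRing.unit. Proof. by case: HR. Qed.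

Lemma parityP x : is_even x \/ is_odd x.
Proof.
case: HR => _ _ _ /(_ x) [] [y xE]; [left | right]; exists y; rewrite -xE; ring.
Qed.

Lemma one_not_even : ~ is_even 1.
Proof.
by move=> [y y2]; move/negP: two_nonunit; apply; apply/unitrP; exists y; rewrite mulrC -y2.
Qed.

Lemma is_odd_unit x : is_odd x -> x \is a GRing.unit.
Proof.
move=> [y xE]; have x_neq0 : x != 0.
  apply/eqP => x0; apply: one_not_even; exists (- y).
  by apply/eqP; rewrite mulrN -addr_eq0 -xE x0.
case: HR => _ _ /(_ _ x_neq0) [[|k] [u [unit_u xE']]] _ _; first by rewrite xE' expr0 mul1r.
exfalso; apply: one_not_even; exists (2 ^+ k * u - y).
by transitivity (x - 2 * y); [rewrite xE | rewrite {1}xE' exprS]; ring.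
Qed.

Lemma is_oddM x y : is_odd x -> is_odd y -> is_odd (x * y).
Proof. by move=> [a ->] [b ->]; exists (a + b + 2 * a * b); ring. Qed.

Lemma is_oddV x : is_odd x -> is_odd x^-1.
Proof.
move=> ox; case: (parityP x^-1) => // - [z zE]; exfalso; apply: one_not_even.
exists (x * z); transitivity (x * x^-1); first by rewrite mulrV // is_odd_unit.
by rewrite zE; ring.
Qed.

Lemma is_even_addX2 x : is_even (x + x ^+ 2).
Proof.
case: (parityP x) => [[y ->] | [y ->]].
  by exists (y + 2 * y ^+ 2); ring.
by exists (1 + 3 * y + 2 * y ^+ 2); ring.
Qed.

Lemma dvd2kD n x y : dvd2k n x -> dvd2k n y -> dvd2k n (x + y :> R).
Proof. by move=> [a ->] [b ->]; exists (a + b); ring. Qed.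

Lemma dvd2kMr n x y : dvd2k n x -> dvd2k n (x * y :> R).
Proof. by move=> [a ->]; exists (a * y); ring. Qed.

Lemma dvd2kW m n x : (m <= n)%N -> dvd2k n x -> dvd2k m (x : R).
Proof. by move=> le_mn [a ->]; exists (2 ^+ (n - m) * a); rewrite mulrA -exprD subnKC. Qed.

Lemma dvd2k_eq0 x : (forall n, dvd2k n x) -> x = 0 :> R.
Proof.
move=> dvd_x; apply/eqP/contraT => x_neq0.
case: HR => _ _ /(_ _ x_neq0) [k [u [unit_u xE]]] _ _; have [v] := dvd_x k.+1.
rewrite xE exprS (mulrC 2) -mulrA => /(mulfI (expf_neq0 k two_neq0)) uE.
by move: unit_u; rewrite uE unitrM (negbTE two_nonunit).
Qed.

(* Hensel's lemma for m^2 + m - k, whose derivative 2m + 1 is a unit. *)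
Lemma is_even_sqr_add k : is_even k -> exists m, m ^+ 2 + m = k.
Proof.
move=> [k' kE].
have lift n m : dvd2k n.+1 (m ^+ 2 + m - k) ->
    exists m', dvd2k n.+1 (m' - m) /\ dvd2k n.+2 (m' ^+ 2 + m' - k).
  move=> [q qE]; case: (parityP q) => [[q' q'E] | [q' q'E]].
    exists m; split; first by exists 0; rewrite subrr mulr0.
    by exists q'; rewrite qE q'E !exprS; ring.
  exists (m + 2 ^+ n.+1); split; first by exists 1; rewrite mulr1; ring.
  exists (1 + q' + m + 2 ^+ n); transitivity (m ^+ 2 + m - k + 2 ^+ n.+1 * (2 * m + 1 + 2 ^+ n.+1)).
    by ring.
  by rewrite qE q'E !exprS; ring.
pose approx n := {m : R | dvd2k n.+1 (m ^+ 2 + m - k)}.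
have approx0 : dvd2k 1 (0 ^+ 2 + 0 - k) by exists (- k'); rewrite kE; ring.
have next n (a : approx n) : {b : approx n.+1 | dvd2k n.+1 (sval b - sval a)}.
  apply: constructive_indefinite_description.
  by have [m' [m'm m'k]] := lift n _ (svalP a); exists (exist _ m' m'k).
pose fix a n : approx n :=
  if n is n'.+1 return approx n then sval (next n' (a n')) else exist _ 0 approx0.
have cauchy n : dvd2k n (sval (a n.+1) - sval (a n)).
  exact: dvd2kW (leqnSn n) (svalP (next n (a n))).
case: HR => _ _ _ _ /(_ _ cauchy) [l lim_l].
exists l; apply/eqP; rewrite -subr_eq0; apply/eqP/dvd2k_eq0 => n.
have -> : l ^+ 2 + l - k =
    (l - sval (a n)) * (l + sval (a n) + 1) + (sval (a n) ^+ 2 + sval (a n) - k) by ring.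
exact: dvd2kD (dvd2kMr _ (lim_l n)) (dvd2kW (leqnSn n) (svalP (a n))).
Qed.
End TwoAdicIntegers.

Section ExplicitMatrices.
Variable R : nmodType.

Definition mxl m n (rows : seq (seq R)) : 'M[R]_(m, n) :=
  \matrix_(i, j) nth 0 (nth [::] rows i) j.

Definition mx2 (x y z w : R) : 'M[R]_2 := mxl 2 2 [:: [:: x; y]; [:: z; w]].

Definition mx2x4 (p0 p1 p2 p3 q0 q1 q2 q3 : R) : 'M[R]_(2, 4) :=
  mxl 2 4 [:: [:: p0; p1; p2; p3]; [:: q0; q1; q2; q3]].

Definition mx4x2 (p0 q0 p1 q1 p2 q2 p3 q3 : R) : 'M[R]_(4, 2) :=
  mxl 4 2 [:: [:: p0; q0]; [:: p1; q1]; [:: p2; q2]; [:: p3; q3]].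

Definition mx4 (a00 a01 a02 a03 a10 a11 a12 a13 a20 a21 a22 a23 a30 a31 a32 a33 : R) :
    'M[R]_4 :=
  mxl 4 4 [:: [:: a00; a01; a02; a03]; [:: a10; a11; a12; a13];
              [:: a20; a21; a22; a23]; [:: a30; a31; a32; a33]].

Definition sym4 (a b c d e f g h i j : R) : 'M[R]_4 := mx4 a b c d b e f g c f h i d g i j.

Lemma sym4_of_symmetric (G : 'M[R]_4) : G^T = G ->
  G = sym4 (G (inord 0) (inord 0)) (G (inord 0) (inord 1)) (G (inord 0) (inord 2))
           (G (inord 0) (inord 3)) (G (inord 1) (inord 1)) (G (inord 1) (inord 2))
           (G (inord 1) (inord 3)) (G (inord 2) (inord 2)) (G (inord 2) (inord 3))
           (G (inord 3) (inord 3)).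
Proof.
move=> G_sym; apply/matrixP; do 2 (case=> [[|[|[|[|?]]]] ?] //=); rewrite !mxE /=;
  first [ by congr (G _ _); apply/val_inj; rewrite /= inordK
        | by rewrite -[in LHS]G_sym mxE; congr (G _ _); apply/val_inj; rewrite /= inordK ].
Qed.

End ExplicitMatrices.

Ltac mx_expand :=
  let p := fresh "p" in let q := fresh "q" in
  apply/matrixP => p q; rewrite !(mxE, big_ord_recl, big_ord0); move: p q;
  do 2 (case=> [[|[|[|[|?]]]] ?] //=).

Ltac mx_ring := mx_expand; ring.

Definition qform4 (T : comPzSemiRingType)
    (n00 n01 n02 n03 n11 n12 n13 n22 n23 n33 x0 x1 x2 x3 : T) : T :=
  n00 * x0 ^+ 2 + n11 * x1 ^+ 2 + n22 * x2 ^+ 2 + n33 * x3 ^+ 2 + n01 * x0 * x1 + n02 * x0 * x2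
  + n03 * x0 * x3 + n12 * x1 * x2 + n13 * x1 * x3 + n23 * x2 * x3.

(* Every quaternary form over Z/4 with even cross terms has a nonzero isotropic vector in
   {0,1}^4, checked over all residues of the coefficients. *)
Lemma qform4_isotropic_mod4_check :
  all (fun k0 => all (fun k1 => all (fun k2 => all (fun k3 =>
  all (fun l01 => all (fun l02 => all (fun l03 => all (fun l12 => all (fun l13 => all (fun l23 =>
    has (fun x0 => has (fun x1 => has (fun x2 => has (fun x3 => [|| x0, x1, x2 | x3] &&
      (4 %| qform4 k0 (2 * l01)%N (2 * l02)%N (2 * l03)%N k1 (2 * l12)%N (2 * l13)%N
                   k2 (2 * l23)%N k3 x0 x1 x2 x3)%N)
    [:: false; true]) [:: false; true]) [:: false; true]) [:: false; true])
  (iota 0 2)) (iota 0 2)) (iota 0 2)) (iota 0 2)) (iota 0 2)) (iota 0 2))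
  (iota 0 4)) (iota 0 4)) (iota 0 4)) (iota 0 4).
Proof. by vm_compute. Qed.

Section Z2Lattices.
Variable R : idomainType.
Hypothesis HR : is_Z2 R.

Lemma isometric_refl n (G : 'M[R]_n) : isometric G G.
Proof. by exists 1%:M; rewrite unitmx1 trmx1 mul1mx mulmx1. Qed.

Lemma isometric_trans n (G1 G2 G3 : 'M[R]_n) :
  isometric G1 G2 -> isometric G2 G3 -> isometric G1 G3.
Proof.
move=> [U [unitU <-]] [V [unitV <-]]; exists (U *m V); split; first by rewrite unitmx_mul unitU.
by rewrite trmx_mul !mulmxA.
Qed.

Lemma isometric_of_mul1 n (G G' U V : 'M[R]_n) :
  U *m V = 1%:M -> U^T *m G *m U = G' -> isometric G G'.
Proof. by move=> /mulmx1_unit[unitU _] GU; exists U. Qed.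

Lemma isometric_of_involution n (G G' U : 'M[R]_n) :
  U *m U = 1%:M -> U^T *m G *m U = G' -> isometric G G'.
Proof. exact: isometric_of_mul1. Qed.

Lemma isometric_block_diag n1 n2 (P P' : 'M[R]_n1) (Q Q' : 'M[R]_n2) :
  isometric P P' -> isometric Q Q' -> isometric (block_mx P 0 0 Q) (block_mx P' 0 0 Q').
Proof.
move=> [U [unitU <-]] [V [unitV <-]]; exists (block_mx U 0 0 V); split.
  by rewrite unitmxE det_ublock unitrM -!unitmxE unitU unitV.
by rewrite tr_block_mx !trmx0 !mulmx_block !(mulmx0, mul0mx, addr0, add0r).
Qed.

Lemma isometricZ n (k : R) (G G' : 'M[R]_n) : isometric G G' -> isometric (k *: G) (k *: G').
Proof. by move=> [U [unitU <-]]; exists U; rewrite -scalemxAr -scalemxAl. Qed.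

Lemma prim_represents_isometric m n (M : 'M[R]_m) (G G' : 'M[R]_n) :
  isometric G G' -> prim_represents M G' -> prim_represents M G.
Proof.
move=> [U [unitU GU]] [X [XG [Y YX]]]; exists (X *m invmx U); split.
  transitivity ((invmx U)^T *m (X^T *m M *m X) *m invmx U); first by rewrite trmx_mul !mulmxA.
  rewrite XG -GU; transitivity ((U *m invmx U)^T *m G *m (U *m invmx U)).
    by rewrite trmx_mul !mulmxA.
  by rewrite mulmxV // trmx1 mul1mx mulmx1.
by exists (U *m Y); rewrite -mulmxA (mulmxA Y) YX mul1mx mulmxV.
Qed.

Lemma isometric_mx2_scale {x y z u y' z' : R} :
  u \is a GRing.unit -> u * y = y' -> u ^+ 2 * z = z' ->
  isometric (mx2 x y y z) (mx2 x y' y' z').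
Proof.
move=> unit_u <- <-.
apply: (isometric_of_mul1 (U := mx2 1 0 0 u) (V := mx2 1 0 0 u^-1)); last by mx_ring.
by mx_expand; rewrite ?mulrV //; ring.
Qed.

Lemma isometric_mx2_shearl {x y z t x' y' : R} :
  x + 2 * t * y + t ^+ 2 * z = x' -> y + t * z = y' ->
  isometric (mx2 x y y z) (mx2 x' y' y' z).
Proof.
move=> <- <-.
by apply: (isometric_of_mul1 (U := mx2 1 0 t 1) (V := mx2 1 0 (- t) 1)); mx_ring.
Qed.

Lemma isometric_mx2_shearr {x y z t y' z' : R} :
  y + t * x = y' -> z + 2 * t * y + t ^+ 2 * x = z' ->
  isometric (mx2 x y y z) (mx2 x y' y' z').
Proof.
move=> <- <-.
by apply: (isometric_of_mul1 (U := mx2 1 t 0 1) (V := mx2 1 (- t) 0 1)); mx_ring.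
Qed.

Lemma mxAE : mxA R = mx2 2 1 1 2.
Proof. by mx_expand. Qed.

Lemma isometric_norm2_mxA c : is_odd c -> isometric (mx2 2 1 1 (2 * c)) (mxA R).
Proof.
move=> odd_c; pose w := 1 - 4 * c.
have unit_w : w \is a GRing.unit by apply: (is_odd_unit HR); exists (- 2 * c); rewrite /w; ring.
have [m mE] : exists m, m ^+ 2 + m = (c - 1) * w^-1.
  by apply: (is_even_sqr_add HR); case: odd_c => c' ->; exists (c' * w^-1); ring.
have unit_u : 1 + 2 * m \is a GRing.unit by apply: (is_odd_unit HR); exists m.
rewrite mxAE; apply: isometric_trans (isometric_mx2_scale unit_u (erefl _) (erefl _)) _.
apply: (isometric_mx2_shearr (t := - m)); first by ring.
transitivity (2 * (c - w * (m ^+ 2 + m))); first by rewrite /w; ring.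
by rewrite mE; transitivity (2 * (c - (c - 1) * (w * w^-1))); [ring | rewrite mulrV //; ring].
Qed.

Lemma isometric_mxA a b c :
  is_odd a -> is_odd b -> is_odd c -> isometric (mx2 (2 * a) b b (2 * c)) (mxA R).
Proof.
(* Scale the second vector to get b = 1, pass to a vector of norm 2, and rescale. *)
move=> odd_a odd_b odd_c; have unit_b := is_odd_unit HR odd_b.
pose c1 := b^-1 ^+ 2 * c.
have odd_c1 : is_odd c1.
  by rewrite /c1 expr2; apply: is_oddM => //; apply: is_oddM; apply: (is_oddV HR).
have unit_c1 := is_odd_unit HR odd_c1.
apply: (isometric_trans (G2 := mx2 (2 * a) 1 1 (2 * c1))).
  by apply: (isometric_mx2_scale _ (mulVr unit_b)); rewrite ?unitrV /c1; last ring.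
have [m mE] : exists m, m ^+ 2 + m = c1 * (1 - a).
  by apply: (is_even_sqr_add HR); case: odd_a => a' ->; exists (- c1 * a'); ring.
apply: (isometric_trans (G2 := mx2 2 (1 + 2 * m) (1 + 2 * m) (2 * c1))).
  apply: (isometric_mx2_shearl (t := c1^-1 * m)).
    transitivity (2 * a + 2 * c1^-1 * (m ^+ 2 * (c1^-1 * c1) + m)); first by ring.
    rewrite mulVr // mulr1 mE; transitivity (2 * a + 2 * (1 - a) * (c1^-1 * c1)); first by ring.
    by rewrite mulVr //; ring.
  by transitivity (1 + 2 * m * (c1^-1 * c1)); [ring | rewrite mulVr //; ring].
have unit_u : 1 + 2 * m \is a GRing.unit by apply: (is_odd_unit HR); exists m.
pose c2 := (1 + 2 * m)^-1 ^+ 2 * c1.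
apply: (isometric_trans (G2 := mx2 2 1 1 (2 * c2))).
  by apply: (isometric_mx2_scale _ (mulVr unit_u)); rewrite ?unitrV /c2; last ring.
apply: isometric_norm2_mxA.
by rewrite /c2 expr2; apply: is_oddM => //; apply: is_oddM; apply: (is_oddV HR); exists m.
Qed.

Lemma col_mx_form_block_diag p q n (X : 'M[R]_(p, n)) (Y : 'M[R]_(q, n)) A B :
  (col_mx X Y)^T *m block_mx A 0 0 B *m col_mx X Y = X^T *m A *m X + Y^T *m B *m Y.
Proof. by rewrite tr_col_mx mul_row_block !mulmx0 addr0 add0r mul_row_col. Qed.

Lemma prim_rep_of_blocks n (X1 X2 X3 X4 : 'M[R]_(2, n)) (Y1 Y2 Y3 Y4 : 'M[R]_(n, 2)) G :
  X1^T *m mxHyp R *m X1 + X2^T *m mxHyp R *m X2 + X3^T *m mxHyp R *m X3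
    + X4^T *m mx1m1 R *m X4 = G ->
  Y1 *m X1 + Y2 *m X2 + Y3 *m X3 + Y4 *m X4 = 1%:M ->
  prim_represents (mxH3_1m1 R) G.
Proof.
move=> XG YX; exists (col_mx X1 (col_mx X2 (col_mx X3 X4))); split.
  rewrite /mxH3_1m1 (@col_mx_form_block_diag 2 (2 + (2 + 2))).
  by rewrite !col_mx_form_block_diag -XG !addrA.
exists (row_mx Y1 (row_mx Y2 (row_mx Y3 Y4))).
by rewrite (@mul_row_col _ n 2 (2 + (2 + 2))) !mul_row_col -YX !addrA.
Qed.

(* The <1,-1> block carries the odd norm a = (1 + a')^2 - a'^2. *)
Lemma prim_rep_odd_corner a b c d e f g h i j :
  is_odd a -> is_even e -> is_even h -> is_even j ->
  prim_represents (mxH3_1m1 R) (sym4 a b c d e f g h i j).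
Proof.
move=> [a' ->] [e' ->] [h' ->] [j' ->].
apply: (prim_rep_of_blocks (X1 := mx2x4 0 1 0 0 0 e' f g) (X2 := mx2x4 0 0 1 0 0 0 h' i)
  (X3 := mx2x4 0 0 0 1 0 0 0 j') (X4 := mx2x4 (1 + a') b c d (- a') (- b) (- c) (- d))
  (Y1 := mx4x2 0 0 1 0 0 0 0 0) (Y2 := mx4x2 0 0 0 0 1 0 0 0) (Y3 := mx4x2 0 0 0 0 0 0 1 0)
  (Y4 := mx4x2 1 1 0 0 0 0 0 0)); mx_ring.
Qed.

(* The last vector goes to (k + 1, k - 1) in <1,-1>; primitivity needs a relation
   u i + v (k - 1) = 1. *)
Lemma prim_rep_corner4 {a b c d e f g h i j k : R} :
  is_even a -> is_even e -> is_even h -> j = 4 * k -> is_odd i \/ is_even k ->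
  prim_represents (mxH3_1m1 R) (sym4 a b c d e f g h i j).
Proof.
move=> [a' ->] [e' ->] [h' ->] -> odd_i_or_even_k.
have [u [v uv]] : exists u v, u * i + v * (k - 1) = 1.
  case: odd_i_or_even_k => [odd_i | [k' kE]].
    by exists i^-1, 0; rewrite mul0r addr0 mulVr // (is_odd_unit HR odd_i).
  have unit_k1 : k - 1 \is a GRing.unit.
    by apply: (is_odd_unit HR); exists (k' - 1); rewrite kE; ring.
  by exists 0, (k - 1)^-1; rewrite mul0r add0r mulVr.
apply: (prim_rep_of_blocks (X1 := mx2x4 1 0 0 0 a' b c d) (X2 := mx2x4 0 1 0 0 0 e' f g)
  (X3 := mx2x4 0 0 1 0 0 0 h' i) (X4 := mx2x4 0 0 0 (k + 1) 0 0 0 (k - 1))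
  (Y1 := mx4x2 1 0 0 0 0 0 0 0) (Y2 := mx4x2 0 0 1 0 0 0 0 0)
  (Y3 := mx4x2 0 0 0 0 1 0 (- u * h') u) (Y4 := mx4x2 0 0 0 0 0 0 0 v)); first by mx_ring.
by mx_expand; try ring; rewrite -[RHS]uv; ring.
Qed.

Lemma isometric_sym4_swap01 {a b c d e f g h i j : R} :
  isometric (sym4 a b c d e f g h i j) (sym4 e b f g a c d h i j).
Proof. by apply: (isometric_of_involution (U := mx4 0 1 0 0 1 0 0 0 0 0 1 0 0 0 0 1)); mx_ring. Qed.

Lemma isometric_sym4_swap02 {a b c d e f g h i j : R} :
  isometric (sym4 a b c d e f g h i j) (sym4 h f c i e b g a d j).
Proof. by apply: (isometric_of_involution (U := mx4 0 0 1 0 0 1 0 0 1 0 0 0 0 0 0 1)); mx_ring. Qed.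

Lemma isometric_sym4_swap03 {a b c d e f g h i j : R} :
  isometric (sym4 a b c d e f g h i j) (sym4 j g i d e f b h c a).
Proof. by apply: (isometric_of_involution (U := mx4 0 0 0 1 0 1 0 0 0 0 1 0 1 0 0 0)); mx_ring. Qed.

Lemma isometric_sym4_swap12 {a b c d e f g h i j : R} :
  isometric (sym4 a b c d e f g h i j) (sym4 a c b d h f i e g j).
Proof. by apply: (isometric_of_involution (U := mx4 1 0 0 0 0 0 1 0 0 1 0 0 0 0 0 1)); mx_ring. Qed.

Lemma isometric_sym4_swap13 {a b c d e f g h i j : R} :
  isometric (sym4 a b c d e f g h i j) (sym4 a d c b j i g h f e).
Proof. by apply: (isometric_of_involution (U := mx4 1 0 0 0 0 0 0 1 0 0 1 0 0 1 0 0)); mx_ring. Qed.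

Lemma isometric_sym4_swap23 {a b c d e f g h i j : R} :
  isometric (sym4 a b c d e f g h i j) (sym4 a b d c e g f j i h).
Proof. by apply: (isometric_of_involution (U := mx4 1 0 0 0 0 1 0 0 0 0 0 1 0 0 1 0)); mx_ring. Qed.

Lemma isometric_sym4_swap0213 {a b c d e f g h i j : R} :
  isometric (sym4 a b c d e f g h i j) (sym4 h i c f j d g a b e).
Proof. exact: isometric_trans isometric_sym4_swap02 isometric_sym4_swap13. Qed.

Lemma isometric_sym4_shear0 t1 t2 t3 {a b c d e f g h i j : R} :
  isometric (sym4 a b c d e f g h i j)
    (sym4 a (b + t1 * a) (c + t2 * a) (d + t3 * a)
       (e + 2 * t1 * b + t1 ^+ 2 * a) (f + t2 * b + t1 * c + t1 * t2 * a)
       (g + t3 * b + t1 * d + t1 * t3 * a) (h + 2 * t2 * c + t2 ^+ 2 * a)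
       (i + t3 * c + t2 * d + t2 * t3 * a) (j + 2 * t3 * d + t3 ^+ 2 * a)).
Proof.
by apply: (isometric_of_mul1 (U := mx4 1 t1 t2 t3 0 1 0 0 0 0 1 0 0 0 0 1)
  (V := mx4 1 (- t1) (- t2) (- t3) 0 1 0 0 0 0 1 0 0 0 0 1)); mx_ring.
Qed.

Lemma isometric_sym4_shear3 x0 x1 x2 {a b c d e f g h i j : R} :
  isometric (sym4 a b c d e f g h i j)
    (sym4 a b c (a * x0 + b * x1 + c * x2 + d) e f (b * x0 + e * x1 + f * x2 + g)
       h (c * x0 + f * x1 + h * x2 + i)
       (x0 * (a * x0 + b * x1 + c * x2 + d) + x1 * (b * x0 + e * x1 + f * x2 + g)
        + x2 * (c * x0 + f * x1 + h * x2 + i) + (d * x0 + g * x1 + i * x2 + j))).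
Proof.
by apply: (isometric_of_mul1 (U := mx4 1 0 0 x0 0 1 0 x1 0 0 1 x2 0 0 0 1)
  (V := mx4 1 0 0 (- x0) 0 1 0 (- x1) 0 0 1 (- x2) 0 0 0 1)); mx_ring.
Qed.

(* Orthogonal splitting off the plane of the first two basis vectors. *)
Lemma isometric_sym4_split {a b e h i j : R} (al be ga de : R) :
  isometric
    (sym4 a b (a * al + b * be) (a * ga + b * de) e (b * al + e * be) (b * ga + e * de) h i j)
    (sym4 a b 0 0 e 0 0 (h - a * al ^+ 2 - 2 * b * al * be - e * be ^+ 2)
       (i - a * al * ga - b * be * ga - b * al * de - e * be * de)
       (j - a * ga ^+ 2 - 2 * b * ga * de - e * de ^+ 2)).
Proof.
by apply: (isometric_of_mul1 (U := mx4 1 0 (- al) (- ga) 0 1 (- be) (- de) 0 0 1 0 0 0 0 1)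
  (V := mx4 1 0 al ga 0 1 be de 0 0 1 0 0 0 0 1)); mx_ring.
Qed.

Lemma sym4_block (a b c a' b' c' : R) :
  sym4 a b 0 0 c 0 0 a' b' c' = block_mx (mx2 a b b c) 0 0 (mx2 a' b' b' c').
Proof.
apply/matrixP => p q; rewrite -(@splitK 2 2 p) -(@splitK 2 2 q).
case: (@split 2 2 p) => p'; case: (@split 2 2 q) => q';
  rewrite !mxE ?unsplitK /= ?(row_mxEl, row_mxEr) ?mxE;
  by move: p' q'; do 2 (case=> [[|[|?]] ?] //=).
Qed.

Lemma residue_mod4 (x : R) : exists2 k, k \in iota 0 4 & exists y, x = k%:R + 4 * y.
Proof.
case: (parityP HR x) => [[y ->] | [y ->]]; case: (parityP HR y) => [[z ->] | [z ->]];
  [exists 0%N | exists 2%N | exists 1%N | exists 3%N] => //; exists z; ring.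
Qed.

Lemma residue_mod2 (x : R) : exists2 l, l \in iota 0 2 & exists y, x = l%:R + 2 * y.
Proof.
by case: (parityP HR x) => [[y ->] | [y ->]]; [exists 0%N | exists 1%N] => //; exists y; ring.
Qed.

Lemma qform4_isotropic_mod4 (n00 n01 n02 n03 n11 n12 n13 n22 n23 n33 : R) :
  exists x0 x1 x2 x3 : bool, [|| x0, x1, x2 | x3] /\
    exists m, qform4 n00 (2 * n01) (2 * n02) (2 * n03) n11 (2 * n12) (2 * n13) n22 (2 * n23) n33
                x0%:R x1%:R x2%:R x3%:R = 4 * m.
Proof.
have [k0 k0_in [r0 ->]] := residue_mod4 n00; have [k1 k1_in [r1 ->]] := residue_mod4 n11.
have [k2 k2_in [r2 ->]] := residue_mod4 n22; have [k3 k3_in [r3 ->]] := residue_mod4 n33.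
have [l01 l01_in [s01 ->]] := residue_mod2 n01; have [l02 l02_in [s02 ->]] := residue_mod2 n02.
have [l03 l03_in [s03 ->]] := residue_mod2 n03; have [l12 l12_in [s12 ->]] := residue_mod2 n12.
have [l13 l13_in [s13 ->]] := residue_mod2 n13; have [l23 l23_in [s23 ->]] := residue_mod2 n23.
have := qform4_isotropic_mod4_check.
move=> /allP/(_ _ k0_in)/allP/(_ _ k1_in)/allP/(_ _ k2_in)/allP/(_ _ k3_in).
move=> /allP/(_ _ l01_in)/allP/(_ _ l02_in)/allP/(_ _ l03_in).
move=> /allP/(_ _ l12_in)/allP/(_ _ l13_in)/allP/(_ _ l23_in).
move=> /hasP[x0 _ /hasP[x1 _ /hasP[x2 _ /hasP[x3 _ /andP[x_neq0 /dvdnP[m qE]]]]]].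
exists x0, x1, x2, x3; split => //.
exists (m%:R + qform4 r0 s01 s02 s03 r1 s12 s13 r2 s23 r3 x0%:R x1%:R x2%:R x3%:R).
have /(congr1 (GRing.natmul (1 : R))) := qE; rewrite /qform4 !(natrD, natrM, natrX) => {}qE.
by rewrite [in RHS]mulrDr [4 * m%:R]mulrC -qE; ring.
Qed.

Definition rep_or_exceptional (G : 'M[R]_4) : Prop :=
  prim_represents (mxH3_1m1 R) G \/ isometric G (mxA_2A R).

Lemma rep_or_exceptional_isometric G G' :
  isometric G G' -> rep_or_exceptional G' -> rep_or_exceptional G.
Proof.
move=> GG' [rep | exc]; first by left; apply: prim_represents_isometric rep.
by right; apply: isometric_trans exc.
Qed.

Lemma prim_rep_odd_diag a b c d e f g h i j :
  is_odd a -> prim_represents (mxH3_1m1 R) (sym4 a b c d e f g h i j).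
Proof.
move=> odd_a; apply: (prim_represents_isometric (isometric_sym4_shear0 (- e) (- h) (- j))).
have even_shift x y : is_even (x + 2 * - x * y + (- x) ^+ 2 * a).
  have [a' aE] := odd_a; have [z zE] := is_even_addX2 HR x.
  exists (z + x ^+ 2 * a' - x * y); transitivity (x + x ^+ 2 + 2 * (x ^+ 2 * a' - x * y)).
    by rewrite aE; ring.
  by rewrite zE; ring.
exact: prim_rep_odd_corner.
Qed.

Lemma isometric_A_perp_2A a b c : is_odd a -> is_odd b -> is_odd c ->
  isometric (sym4 2 1 0 0 2 0 0 (2 * (2 * a)) (2 * b) (2 * (2 * c))) (mxA_2A R).
Proof.
move=> odd_a odd_b odd_c; rewrite sym4_block /mxA_2A -mxAE.
apply: (@isometric_block_diag 2 2); first exact: isometric_refl.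
rewrite (_ : mx2 _ _ _ _ = 2 *: mx2 (2 * a) b b (2 * c)); last by mx_ring.
exact/isometricZ/isometric_mxA.
Qed.

Lemma rep_or_exceptional_A_perp h i j :
  is_even h -> is_even j -> rep_or_exceptional (sym4 2 1 0 0 2 0 0 h i j).
Proof.
(* The last basis vector becomes, case by case, e0 + e2, e0 + e3, e2, e2, e3 or e2 + e3. *)
move=> [r ->] [t ->].
case: (parityP HR r) => [[r2 ->] | [r' ->]]; last first.
  left; apply: (prim_represents_isometric isometric_sym4_swap0213).
  apply: (prim_represents_isometric isometric_sym4_swap23).
  apply: (prim_represents_isometric (isometric_sym4_shear3 1 0 0)).
  apply: (prim_rep_corner4 (k := 1 + r')); try exact: is_even_mul2;
    try exact: is_even2; first by ring.
  by left; exists 0; ring.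
case: (parityP HR t) => [[t2 ->] | [t' ->]]; last first.
  left; apply: (prim_represents_isometric isometric_sym4_swap0213).
  apply: (prim_represents_isometric isometric_sym4_swap23).
  apply: (prim_represents_isometric (isometric_sym4_shear3 0 1 0)).
  apply: (prim_rep_corner4 (k := 1 + t')); try exact: is_even_mul2;
    try exact: is_even2; first by ring.
  by left; exists 0; ring.
case: (parityP HR i) => [[i1 ->] | [i' ->]]; last first.
  left; apply: (prim_represents_isometric isometric_sym4_swap23).
  apply: (prim_rep_corner4 (k := r2)); try exact: is_even_mul2;
    try exact: is_even2; first by ring.
  by left; exists i'.
case: (parityP HR r2) => [[r3 ->] | [r3 ->]].
  left; apply: (prim_represents_isometric isometric_sym4_swap23).
  apply: (prim_rep_corner4 (k := 2 * r3)); try exact: is_even_mul2;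
    try exact: is_even2; first by ring.
  by right; exists r3.
case: (parityP HR t2) => [[t3 ->] | [t3 ->]].
  left; apply: (prim_rep_corner4 (k := 2 * t3)); try exact: is_even_mul2;
    try exact: is_even2; first by ring.
  by right; exists t3.
case: (parityP HR i1) => [[i2 ->] | [i2 ->]]; last first.
  by right; apply: isometric_A_perp_2A; apply: is_odd_add_mul2.
left; apply: (prim_represents_isometric (isometric_sym4_shear3 0 0 1)).
apply: (prim_rep_corner4 (k := 2 * (1 + r3 + i2 + t3))); try exact: is_even_mul2;
  try exact: is_even2.
  by ring.
by right; exists (1 + r3 + i2 + t3).
Qed.

Lemma rep_or_exceptional_plane_perp a b e h i j :
  is_even a -> is_odd b -> is_even e -> is_even h -> is_even j ->
  rep_or_exceptional (sym4 a b 0 0 e 0 0 h i j).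
Proof.
move=> [p ->] odd_b [q ->] even_h even_j.
case: (parityP HR p) => [[p2 ->] | odd_p].
  left; apply: (prim_represents_isometric isometric_sym4_swap0213).
  apply: (prim_represents_isometric isometric_sym4_swap23).
  by apply: (prim_rep_corner4 (k := p2)) => //; [exact: is_even_mul2 | ring | left].
case: (parityP HR q) => [[q2 ->] | odd_q].
  left; apply: (prim_represents_isometric isometric_sym4_swap0213).
  by apply: (prim_rep_corner4 (k := q2)) => //; [exact: is_even_mul2 | ring | left].
apply: (rep_or_exceptional_isometric (G' := sym4 2 1 0 0 2 0 0 h i j)).
  rewrite !sym4_block -mxAE; apply: (@isometric_block_diag 2 2); last exact: isometric_refl.
  exact: isometric_mxA.
exact: rep_or_exceptional_A_perp.
Qed.

Lemma rep_or_exceptional_odd_offdiag a b c d e f g h i j :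
  is_even a -> is_odd b -> is_even e -> is_even h -> is_even j ->
  rep_or_exceptional (sym4 a b c d e f g h i j).
Proof.
move=> [a1 ->] odd_b [e1 ->] [h1 ->] [j1 ->].
have unit_det : 2 * a1 * (2 * e1) - b ^+ 2 \is a GRing.unit.
  apply: (is_odd_unit HR); case: odd_b => b' ->.
  by exists (2 * a1 * e1 - 1 - 2 * b' - 2 * b' ^+ 2); ring.
have solve u v : exists al be, u = 2 * a1 * al + b * be /\ v = b * al + 2 * e1 * be.
  pose D := 2 * a1 * (2 * e1) - b ^+ 2.
  exists ((2 * e1 * u - b * v) * D^-1), ((2 * a1 * v - b * u) * D^-1); split.
    by transitivity (u * (D * D^-1)); [rewrite mulrV // mulr1 | rewrite /D; ring].
  by transitivity (v * (D * D^-1)); [rewrite mulrV // mulr1 | rewrite /D; ring].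
have [al [be [-> ->]]] := solve c f; have [ga [de [-> ->]]] := solve d g.
apply: (rep_or_exceptional_isometric (isometric_sym4_split al be ga de)).
apply: rep_or_exceptional_plane_perp => //; try exact: is_even_mul2.
  by exists (h1 - a1 * al ^+ 2 - b * al * be - e1 * be ^+ 2); ring.
by exists (j1 - a1 * ga ^+ 2 - b * ga * de - e1 * de ^+ 2); ring.
Qed.

Lemma prim_rep_double a b c d e f g h i j :
  prim_represents (mxH3_1m1 R)
    (sym4 (2 * a) (2 * b) (2 * c) (2 * d) (2 * e) (2 * f) (2 * g) (2 * h) (2 * i) (2 * j)).
Proof.
(* The isotropic vector x has norm 8 m; make it the last basis vector. *)
have [x0 [x1 [x2 [x3 [x_neq0 [m qE]]]]]] := qform4_isotropic_mod4 a b c d e f g h i j.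
case: x3 x_neq0 qE => /= [_ qE | x_neq0 qE].
  apply: (prim_represents_isometric (isometric_sym4_shear3 x0%:R x1%:R x2%:R)).
  apply: (prim_rep_corner4 (k := 2 * m)); try exact: is_even_mul2.
    by rewrite mulrCA -qE /qform4; ring.
  by right; exists m.
case: x2 x_neq0 qE => /= [_ qE | x_neq0 qE].
  apply: (prim_represents_isometric isometric_sym4_swap23).
  apply: (prim_represents_isometric (isometric_sym4_shear3 x0%:R x1%:R 0)).
  apply: (prim_rep_corner4 (k := 2 * m)); try exact: is_even_mul2.
    by rewrite mulrCA -qE /qform4; ring.
  by right; exists m.
case: x1 x_neq0 qE => /= [_ qE | x_neq0 qE].
  apply: (prim_represents_isometric isometric_sym4_swap13).
  apply: (prim_represents_isometric (isometric_sym4_shear3 x0%:R 0 0)).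
  apply: (prim_rep_corner4 (k := 2 * m)); try exact: is_even_mul2.
    by rewrite mulrCA -qE /qform4; ring.
  by right; exists m.
case: x0 x_neq0 qE => //= _ qE.
apply: (prim_represents_isometric isometric_sym4_swap03).
apply: (prim_rep_corner4 (k := 2 * m)); try exact: is_even_mul2.
  by rewrite mulrCA -qE /qform4; ring.
by right; exists m.
Qed.

Lemma rep_or_exceptional_even_diag a b c d e f g h i j :
  is_even a -> is_even e -> is_even h -> is_even j ->
  rep_or_exceptional (sym4 a b c d e f g h i j).
Proof.
move=> even_a even_e even_h even_j.
case: (parityP HR b) => [[b1 ->] | odd_b]; last exact: rep_or_exceptional_odd_offdiag.
case: (parityP HR c) => [[c1 ->] | odd_c]; last first.
  apply: (rep_or_exceptional_isometric isometric_sym4_swap12).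
  exact: rep_or_exceptional_odd_offdiag.
case: (parityP HR d) => [[d1 ->] | odd_d]; last first.
  apply: (rep_or_exceptional_isometric isometric_sym4_swap13).
  exact: rep_or_exceptional_odd_offdiag.
case: (parityP HR f) => [[f1 ->] | odd_f]; last first.
  apply: (rep_or_exceptional_isometric isometric_sym4_swap02).
  exact: rep_or_exceptional_odd_offdiag.
case: (parityP HR g) => [[g1 ->] | odd_g]; last first.
  apply: (rep_or_exceptional_isometric isometric_sym4_swap03).
  exact: rep_or_exceptional_odd_offdiag.
case: (parityP HR i) => [[i1 ->] | odd_i]; last first.
  apply: (rep_or_exceptional_isometric isometric_sym4_swap0213).
  exact: rep_or_exceptional_odd_offdiag.
case: even_a even_e even_h even_j => [a1 ->] [e1 ->] [h1 ->] [j1 ->].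
by left; apply: prim_rep_double.
Qed.

Lemma rep_or_exceptional_sym4 a b c d e f g h i j : rep_or_exceptional (sym4 a b c d e f g h i j).
Proof.
case: (parityP HR a) => [even_a | odd_a]; last by left; apply: prim_rep_odd_diag.
case: (parityP HR e) => [even_e | odd_e]; last first.
  by left; apply: (prim_represents_isometric isometric_sym4_swap01); apply: prim_rep_odd_diag.
case: (parityP HR h) => [even_h | odd_h]; last first.
  by left; apply: (prim_represents_isometric isometric_sym4_swap02); apply: prim_rep_odd_diag.
case: (parityP HR j) => [even_j | odd_j]; last first.
  by left; apply: (prim_represents_isometric isometric_sym4_swap03); apply: prim_rep_odd_diag.
exact: rep_or_exceptional_even_diag.
Qed.

Lemma rep_or_exceptional_symmetric (G : 'M[R]_4) : G^T = G -> rep_or_exceptional G.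
Proof. by move=> /sym4_of_symmetric ->; apply: rep_or_exceptional_sym4. Qed.

End Z2Lattices.

Theorem lemma6p7 (R : idomainType) (HR : is_Z2 R) (G : 'M[R]_4) :
  G^T = G -> \det G != 0 ->
  ~ isometric G (mxA_2A R) ->
  prim_represents (mxH3_1m1 R) G.
Proof.
by move=> G_sym _ not_exc; case: (rep_or_exceptional_symmetric HR G_sym).
Qed.
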